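(* Fix an integer $l\ge -1$ and let $l_1=\lfloor\frac{l+1}{2}\rfloor$. Define \[H_l(x)=\sum_{k=-1}^{l}\ \sum_{\substack{\overline{x}\in\mathcal{Y}(k)\\ a(\overline{x})+b(\overline{x})-c(\overline{x})=2k+1-l}}\binom{x-3k-2}{k+1-a(\overline{x})-2b(\overline{x})},\] where $\binom{x-r}{s}$ denotes the polynomial $\frac{(x-r)(x-r-1)\cdots(x-r-s+1)}{s!}$ in $x$. Then $H_l(x)$ is a polynomial of degree $l_1$, and $l_1!\,H_l(x)$ is a monic polynomial with integer coefficients.
   Context: For $\overline{x}=(x_1,\ldots,x_t)\in\{1,2,3\}^t$ let $a(\overline{x})=\#\{i: x_i=2\}$, $b(\overline{x})=\#\{i: x_i=3\}$, and $c(\overline{x})=\#\{i\in[1,t]: \exists j_1,j_2\in[1,t],\ j_1+j_2=i,\ (x_{j_1},x_{j_2},x_i)=(1,1,2)\}$. For an integer $k\ge 0$, $\mathcal{Y}(k)$ is the set of tuples $\overline{x}\in\{1,2,3\}^{2k+1}$ such that (i) whenever $i_1,i_2,i_3\in[1,2k+1]$ satisfy $i_1+i_2=i_3$, $(x_{i_1},x_{i_2},x_{i_3})\ne(1,1,3)$, and (ii) $a(\overline{x})+2b(\overline{x})\le k+1$; $\mathcal{Y}(-1)=\{\emptyset\}$ consists of the empty tuple (with $a=b=c=0$). *)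

From HB Require Import structures.
From mathcomp Require Import all_boot all_order all_algebra.
Set Implicit Arguments. Unset Strict Implicit. Unset Printing Implicit Defensive.
Import Order.TTheory GRing.Theory Num.Theory.
Local Open Scope ring_scope.

(* A tuple xbar in {1,2,3}^t is encoded as t.-tuple 'I_3; the value at
   1-indexed position i+1 (i : 'I_t) is (tnth x i).+1. *)
Definition xval (t : nat) (x : t.-tuple 'I_3) (i : 'I_t) : nat := (tnth x i).+1.

Definition acnt (t : nat) (x : t.-tuple 'I_3) : nat := #|[set i | xval x i == 2%N]|.
Definition bcnt (t : nat) (x : t.-tuple 'I_3) : nat := #|[set i | xval x i == 3%N]|.

Definition ccnt (t : nat) (x : t.-tuple 'I_3) : nat :=
  #|[set i : 'I_t | [exists j1 : 'I_t, exists j2 : 'I_t,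
        [&& (j1.+1 + j2.+1 == i.+1)%N, xval x j1 == 1%N, xval x j2 == 1%N
          & xval x i == 2%N]]]|.

Definition no113 (t : nat) (x : t.-tuple 'I_3) : bool :=
  [forall i1 : 'I_t, forall i2 : 'I_t, forall i3 : 'I_t,
     (i1.+1 + i2.+1 == i3.+1)%N ==>
       ~~ [&& xval x i1 == 1%N, xval x i2 == 1%N & xval x i3 == 3%N]].

(* length of tuples in Y(k): 2k+1 for k >= 0, and 0 for k = -1
   (Y(-1) = {empty tuple}); only k >= -1 is ever used. *)
Definition Ylen (k : int) : nat :=
  match k with Posz m => (2 * m + 1)%N | Negz _ => 0%N end.

(* membership in Y(k) for k >= 0; for k = -1 (Ylen = 0) it holds for the
   unique empty tuple, matching Y(-1) = {empty}. *)
Definition inY (k : int) (x : (Ylen k).-tuple 'I_3) : bool :=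
  no113 x && ((acnt x)%:Z + 2 * (bcnt x)%:Z <= k + 1).

(* binomial polynomial binom(x - r, s) = (x-r)(x-r-1)...(x-r-s+1)/s! ;
   zero for negative s (never used in the sum below). *)
Definition binpoly (r s : int) : {poly rat} :=
  match s with
  | Posz m => ((m`!)%:R^-1 : rat) *: \prod_(i < m) ('X - ((r + i%:Z)%:~R)%:P)
  | Negz _ => 0
  end.

(* k ranges over -1, 0, ..., l *)
Definition krange (l : int) : seq int := [seq (i%:Z - 1) | i <- iota 0 (absz (l + 2))].

Definition H (l : int) : {poly rat} :=
  \sum_(k <- krange l)
    \sum_(x : (Ylen k).-tuple 'I_3 |
            inY x && ((acnt x)%:Z + (bcnt x)%:Z - (ccnt x)%:Z == 2 * k + 1 - l))
      binpoly (3 * k + 2) (k + 1 - (acnt x)%:Z - 2 * (bcnt x)%:Z).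

From HB Require Import structures.
From mathcomp Require Import all_boot all_order all_algebra zify.
Import Order.TTheory GRing.Theory Num.Theory.
Local Open Scope ring_scope.

(* Write s = k + 1 - a - 2b for the degree of the summand indexed by x in Y(k).
   The side condition a + b - c = 2k + 1 - l is equivalent to
   l + 1 = 2s + a + 3b + c, so with c <= a every summand has degree at most
   l1 = (l + 1)/2, and degree l1 forces b = c = 0, a = (l + 1) mod 2 and
   determines k.  A tuple with no 3 and c = 0 has its 2s only in the first
   position (a 2 at position i > 1 would be x_1 + x_(i-1)), so exactly one
   summand has degree l1 and it contributes the leading coefficient 1/l1!.
   Integrality: l1! binom(X - r, s) = (l1!/s!) (X - r) ... (X - r - s + 1). *)

Section BinomialPolynomial.

Variable r : int.

Let falling (m : nat) : {poly rat} := \prod_(i < m) ('X - ((r + i%:Z)%:~R)%:P).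

Let size_falling m : size (falling m) = m.+1.
Proof. by rewrite size_prod_XsubC /index_enum unlock -enumT size_enum_ord. Qed.

Lemma size_binpoly_le (s : int) (n : nat) :
  s <= n%:Z -> (size (binpoly r s) <= n.+1)%N.
Proof.
case: s => [m|m] hs /=; last by rewrite size_poly0.
by apply: leq_trans (size_scale_leq _ _) _; rewrite size_falling; lia.
Qed.

Lemma coef_binpoly_top (s : int) (n : nat) :
  s <= n%:Z -> (binpoly r s)`_n = (n`!%:R)^-1 *+ (s == n%:Z).
Proof.
case: s => [m|m] hs /=; last by rewrite coef0 mulr0n.
have [<- | ne_mn] := eqVneq m n.
  have : falling m \is monic := monic_prod_XsubC _ _ _.
  rewrite monicE lead_coefE size_falling eqxx coefZ => /eqP ->.
  by rewrite mulr1.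
rewrite eqz_nat (negbTE ne_mn) nth_default //.
by apply: leq_trans (size_scale_leq _ _) _; rewrite size_falling; lia.
Qed.

Lemma binpoly_fact_int (s : int) (n : nat) :
  s <= n%:Z -> n`!%:R *: binpoly r s \is a polyOver Num.int.
Proof.
case: s => [m|m] hs /=; last by rewrite scaler0 polyOver0.
have dvd_fact : (m`! %| n`!)%N.
  by rewrite -(@bin_fact n m); [rewrite mulnCA dvdn_mulr | lia].
rewrite scalerA -natr_div ?unitfE ?pnatr_eq0 -?lt0n ?fact_gt0 //.
apply: polyOverZ; first exact: rpred_nat.
by apply: rpred_prod => i _; rewrite polyOverXsubC rpred_int.
Qed.

End BinomialPolynomial.

Lemma size_monic_scale_fact {R : numFieldType} {p : {poly R}} {n : nat} :
  (size p <= n.+1)%N -> p`_n = (n`!%:R)^-1 ->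
  size p = n.+1 /\ n`!%:R *: p \is monic.
Proof.
move=> size_p coef_p.
have fact_neq0 : n`!%:R != 0 :> R by rewrite pnatr_eq0 -lt0n fact_gt0.
have size_pE : size p = n.+1.
  apply/eqP; rewrite eqn_leq size_p ltnNge; apply/negP => small_p.
  by move: fact_neq0; rewrite -invr_eq0 -coef_p nth_default ?eqxx.
by rewrite monicE lead_coefZ lead_coefE size_pE coef_p mulfV.
Qed.

Definition ones_tuple (e : bool) (t : nat) : t.-tuple 'I_3 :=
  [tuple (if e && (i == 0%N :> nat) then inord 1 else ord0) | i < t].

Section OnesTuple.

Variables (e : bool) (t : nat).

Lemma xval_ones_tuple (i : 'I_t) :
  xval (ones_tuple e t) i = if e && (i == 0%N :> nat) then 2%N else 1%N.
Proof. by rewrite /xval tnth_mktuple; case: ifP => // _; rewrite inordK. Qed.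

Lemma bcnt_ones_tuple : bcnt (ones_tuple e t) = 0%N.
Proof. by apply: eq_card0 => i; rewrite !inE xval_ones_tuple; case: ifP. Qed.

Lemma ccnt_ones_tuple : ccnt (ones_tuple e t) = 0%N.
Proof.
apply: eq_card0 => i; rewrite !inE; apply/negbTE/existsP => -[j1 /existsP [j2]].
case/and4P => /eqP sum_j _ _; rewrite xval_ones_tuple.
by case: ifP => // /andP [_ /eqP /= i0]; lia.
Qed.

Lemma no113_ones_tuple : no113 (ones_tuple e t).
Proof.
apply/forallP => i1; apply/forallP => i2; apply/forallP => i3.
apply/implyP => _.
by rewrite [xval _ i3]xval_ones_tuple; case: ifP; rewrite !andbF.
Qed.

End OnesTuple.

Lemma acnt_ones_tuple e t : acnt (ones_tuple e t) = e && (0 < t)%N.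
Proof.
case: t => [|t']; first by rewrite andbF /acnt; apply: eq_card0 => -[].
rewrite andbT /acnt.
have -> : [set i | xval (ones_tuple e t'.+1) i == 2%N] =
          if e then [set ord0] else set0.
  apply/setP => i; rewrite !inE xval_ones_tuple.
  case: e => /=; rewrite ?inE //.
  case: (i =P ord0) => [-> // | ne].
  by rewrite ifF //; apply/negbTE/eqP => i0; apply/ne/val_inj.
by case: e; rewrite ?cards1 ?cards0.
Qed.

Lemma ccnt_le_acnt {t} (x : t.-tuple 'I_3) : (ccnt x <= acnt x)%N.
Proof.
apply/subset_leq_card/subsetP => i; rewrite !inE.
by case/existsP => j1 /existsP [j2 /and4P [_ _ _ ->]].
Qed.

Section OnesTupleUniqueness.

Context {t : nat} {x : t.-tuple 'I_3} {e : bool}.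
Hypotheses (b0 : bcnt x = 0%N) (c0 : ccnt x = 0%N) (a_e : acnt x = e).

Lemma xval_eq1 {i : 'I_t} : xval x i != 2%N -> xval x i = 1%N.
Proof.
have : i \notin [set i | xval x i == 3%N] by rewrite (cards0_eq b0) inE.
by rewrite inE /xval; have := ltn_ord (tnth x i); lia.
Qed.

Lemma xval_eq2_inj {i j : 'I_t} : xval x i = 2%N -> xval x j = 2%N -> i = j.
Proof.
have a_le1 : (acnt x <= 1)%N by rewrite a_e leq_b1.
by move=> xi xj; apply: (card_le1_eqP a_le1); rewrite inE; apply/eqP.
Qed.

Lemma xval_eq2_head {i : 'I_t} : xval x i = 2%N -> i = 0%N :> nat.
Proof.
move=> xi; case: (posnP i) => // i_pos.
have t_pos : (0 < t)%N by have := ltn_ord i; lia.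
have pred_lt : (i.-1 < t)%N by rewrite prednK //; exact: ltnW (ltn_ord i).
have x1 (j : 'I_t) : j != i :> nat -> xval x j = 1%N.
  move=> ne_ji; apply: xval_eq1; apply: contra_neq ne_ji => xj.
  by rewrite (xval_eq2_inj xj xi).
move/setP/(_ i): (cards0_eq c0); rewrite !inE => /negbT/negP[].
apply/existsP; exists (Ordinal t_pos); apply/existsP; exists (Ordinal pred_lt).
by rewrite xi !x1 /= ?prednK ?eqxx //; lia.
Qed.

Lemma eq_ones_tuple : x = ones_tuple e t.
Proof.
apply: eq_from_tnth => i; apply/val_inj/succn_inj.
change (xval x i = xval (ones_tuple e t) i); rewrite xval_ones_tuple.
have [xi | ne2] := eqVneq (xval x i) 2%N.
  have : (0 < acnt x)%N by apply/card_gt0P; exists i; rewrite inE xi.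
  by rewrite a_e lt0b => ->; rewrite (xval_eq2_head xi) xi.
rewrite (xval_eq1 ne2); case: ifP => // /andP [e_true /eqP i0].
have [j] : exists j, j \in [set j | xval x j == 2%N].
  by apply/card_gt0P; rewrite -/(acnt x) a_e e_true.
rewrite inE => /eqP xj; have j0 := xval_eq2_head xj.
by move: ne2; rewrite (_ : i = j) ?xj //; apply: val_inj; rewrite /= i0 j0.
Qed.

End OnesTupleUniqueness.

Definition H_index (l k : int) (x : (Ylen k).-tuple 'I_3) : bool :=
  inY x && ((acnt x)%:Z + (bcnt x)%:Z - (ccnt x)%:Z == 2 * k + 1 - l).

Definition H_deg {k : int} (x : (Ylen k).-tuple 'I_3) : int :=
  k + 1 - (acnt x)%:Z - 2 * (bcnt x)%:Z.

Lemma H_sumE (l : int) :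
  H l = \sum_(k <- krange l)
          \sum_(x | H_index l k x) binpoly (3 * k + 2) (H_deg x).
Proof. by []. Qed.

Lemma Ylen_gt0 (k : int) : 0 <= k -> (0 < Ylen k)%N.
Proof. by case: k => // n _ /=; lia. Qed.

Section TopCoefficient.

Context {l : int} {L : nat}.
Hypothesis lL : l + 1 = L%:Z.

Local Notation l1 := L./2.
Local Notation k_top := (l1%:Z - 1 + (odd L)%:Z).

Lemma H_deg_balance {k} {x : (Ylen k).-tuple 'I_3} : H_index l k x ->
  L%:Z = 2 * H_deg x + (acnt x)%:Z + 3 * (bcnt x)%:Z + (ccnt x)%:Z.
Proof. by case/andP => _ /eqP; rewrite /H_deg; lia. Qed.

Lemma H_deg_le {k} {x : (Ylen k).-tuple 'I_3} :
  H_index l k x -> H_deg x <= l1%:Z.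
Proof. by move/H_deg_balance; lia. Qed.

Lemma H_deg_eq_top {k} {x : (Ylen k).-tuple 'I_3} :
  H_index l k x -> H_deg x = l1%:Z ->
  [/\ bcnt x = 0%N, ccnt x = 0%N, acnt x = odd L & k = k_top].
Proof.
move=> xH x_top; have := H_deg_balance xH; have := ccnt_le_acnt x.
by case/andP: xH => _ /eqP; rewrite /H_deg in x_top *; split; lia.
Qed.

Lemma H_index_ones_tuple :
  let x := ones_tuple (odd L) (Ylen k_top) in
  H_index l k_top x && (H_deg x == l1%:Z).
Proof.
have a_top : (odd L && (0 < Ylen k_top))%N = odd L.
  by case oL: (odd L) => //=; apply: Ylen_gt0; lia.
rewrite /= /H_index /inY /H_deg acnt_ones_tuple bcnt_ones_tuple ccnt_ones_tuple.
by rewrite no113_ones_tuple a_top; lia.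
Qed.

Lemma card_H_index_top k :
  #|[pred x : (Ylen k).-tuple 'I_3 | H_index l k x && (H_deg x == l1%:Z)]|
  = (k == k_top).
Proof.
have [-> | ne_k] := eqVneq k k_top.
  apply: eq_card1 => x; rewrite inE.
  apply/idP/eqP => [/andP [xH /eqP x_top] | ->].
    have [b0 c0 a_e _] := H_deg_eq_top xH x_top.
    exact: eq_ones_tuple b0 c0 a_e.
  exact: H_index_ones_tuple.
apply: eq_card0 => x; rewrite inE; apply/negbTE/andP => -[xH /eqP x_top].
by have [_ _ _ k_eq] := H_deg_eq_top xH x_top; rewrite k_eq eqxx in ne_k.
Qed.

Lemma count_krange_top : count_mem k_top (krange l) = 1%N.
Proof.
rewrite count_uniq_mem; last by rewrite map_inj_uniq ?iota_uniq // => i j; lia.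
apply/eqP; rewrite eqb1; apply/mapP; exists (l1 + odd L)%N; last by lia.
by rewrite mem_iota; lia.
Qed.

Lemma size_H_le : (size (H l) <= l1.+1)%N.
Proof.
rewrite H_sumE; apply: leq_trans (size_sum _ _ _) _.
apply/bigmax_leqP_seq => k _ _.
apply: leq_trans (size_sum _ _ _) _; apply/bigmax_leqP_seq => x _ xH.
exact: size_binpoly_le (H_deg_le xH).
Qed.

Lemma coef_H_top : (H l)`_l1 = (l1`!%:R)^-1.
Proof.
rewrite H_sumE coef_sum.
under eq_bigr => k _.
  rewrite coef_sum.
  under eq_bigr => x xH do rewrite coef_binpoly_top ?(H_deg_le xH) //.
  rewrite sumrMnr -big_mkcondr sum1_card card_H_index_top.
  over.
by rewrite sumrMnr -big_mkcond sum1_count count_krange_top.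
Qed.

Lemma H_fact_int : l1`!%:R *: H l \is a polyOver Num.int.
Proof.
apply/polyOverP => i; rewrite H_sumE scaler_sumr coef_sum.
apply: rpred_sum => k _.
rewrite scaler_sumr coef_sum; apply: rpred_sum => x xH.
exact/polyOverP/binpoly_fact_int/(H_deg_le xH).
Qed.

End TopCoefficient.

Theorem proposition8p11 (l : int) (hl : -1 <= l) :
  let l1 := (absz (l + 1))./2 in
  size (H l) = l1.+1 /\
  ((l1`!)%:R *: H l) \is monic /\
  ((l1`!)%:R *: H l) \is a polyOver Num.int.
Proof.
move=> l1; have lL : l + 1 = (absz (l + 1))%:Z by lia.
have [size_H monic_H] := size_monic_scale_fact (size_H_le lL) (coef_H_top lL).
by split; [|split; [|exact: H_fact_int lL]].
Qed.
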